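(* Let $P$ be a Delzant polyhedron, $v$ a weight with $(v,w)\in\mathcal W(P)$, and let $\mathbf H=(H_{ij})$ satisfy the conditions defining $\mathcal H^\varepsilon_{\alpha,T}$. Then there is $C>0$ such that for all $i,j$, $$\sup_P\Big(v^{\varepsilon-1}\sum_k|(vH_{ij})_k|\Big)<C,$$ and in particular for every $j$, $\sup_P\big(v^{\varepsilon-1}\sum_i|(vH_{ij})_i|\big)<C$.
   Context: $\mathfrak t^*\cong\mathbb R^n$; $P$ a Delzant polyhedron (possibly unbounded); $P_\delta$ the inner parallel polyhedron at distance $\delta$; $\mathbf H=(H_{ij})$ a positive-definite matrix-valued function on $P$ (e.g. $(\mathrm{Hess}\,u)^{-1}$ for the symplectic potential $u$ of an AK metric); subscripts denote $x$-derivatives. $\mathcal W(P)$: $v>0$ smooth on $\overline P$, $|v|\le C_1e^{-C_2|x|}$, $\sum_{|a|\le k}|v^{-1}\partial^av|\le C(k)$; and $\sum_{|a|\le k}\sup|v^{-\beta^*}\partial^aw|\le C_3(k)$ for some $\beta^*>0$. Conditions of $\mathcal H^\varepsilon_{\alpha,T}$ ($\varepsilon\in[0,\min\{\beta^*,\frac12\})$): (1) $\sup_Pv^\varepsilon\|\mathbf H\|^2<\infty$; (2) $\sup_Pv^\varepsilon\sum_{i,j,k}|\partial_kH_{ij}|^2<\infty$; (3) $|\partial_k\partial_lH_{ij}|^2<C$ on $\overline P\setminus P_{\bar\delta}$ for some $\bar\delta>0$; (4) $\sup|v^\varepsilon u|<\infty$ on $\overline P$ and $\sum_{|a|\le2}\sup_{P_\delta}|v^\varepsilon\partial^au|<\infty$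 for small $\delta$, where $\mathbf H=(\mathrm{Hess}\,u)^{-1}$. *)

From HB Require Import structures.
From mathcomp Require Import all_boot all_order all_algebra.
From mathcomp Require Import all_classical all_reals all_analysis.
Set Implicit Arguments. Unset Strict Implicit. Unset Printing Implicit Defensive.
Import Order.TTheory GRing.Theory Num.Theory.
Import numFieldNormedType.Exports.
Local Open Scope classical_set_scope.
Local Open Scope ring_scope.

Section Defs.
Variables (R : realType) (n : nat).
Notation pt := 'rV[R]_n.

Definition partial (i : 'I_n) (f : pt -> R) : pt -> R :=
  fun x => 'D_(delta_mx 0 i) f x.

Definition dseq (s : seq 'I_n) (f : pt -> R) : pt -> R :=
  foldr partial f s.

Definition dmulti (a : 'I_n -> nat) (f : pt -> R) : pt -> R :=
  foldr (fun i g => iter (a i) (partial i) g) f (enum 'I_n).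

Definition smooth_on (U : set pt) (f : pt -> R) : Prop :=
  open U /\ forall (s : seq 'I_n) (x : pt), U x -> differentiable (dseq s f) x.

Definition smooth_on_closed (A : set pt) (f : pt -> R) : Prop :=
  exists U : set pt, A `<=` U /\ smooth_on U f.

Definition eucl (x : pt) : R := Num.sqrt (\sum_i (x 0 i) ^+ 2).

Definition Hess (f : pt -> R) (x : pt) : 'M[R]_n :=
  \matrix_(i, j) partial i (partial j f) x.

Definition posdef (M : 'M[R]_n) : Prop :=
  M^T = M /\ forall z : 'rV[R]_n, z != 0 -> 0 < (z *m M *m z^T) 0 0.

Variables (d : nat) (u : 'I_d -> 'rV[int]_n) (lam : 'I_d -> R).

Definition pair (x : pt) (l : 'I_d) : R := \sum_i x 0 i * ((u l) 0 i)%:~R.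

Definition Ppoly : set pt := [set x | forall l, lam l < pair x l].

Definition normu (l : 'I_d) : R := Num.sqrt (\sum_i (((u l) 0 i)%:~R : R) ^+ 2).

(* inner parallel polyhedron at distance delta *)
Definition Pdelta (delta : R) : set pt :=
  [set x | forall l, lam l + delta * normu l < pair x l].

(* Delzant polyhedron: nonempty, every inequality defines a facet, and at every
   point of the closure the normals of the active facets extend to a Z-basis. *)
Definition delzant : Prop :=
  Ppoly !=set0 /\
  (forall l, exists x, pair x l = lam l /\ forall l', l' != l -> lam l' < pair x l') /\
  (forall x, closure Ppoly x ->
     exists (M : 'M[int]_n) (f : 'I_d -> 'I_n),
       M \in unitmx /\
       {in [pred l | pair x l == lam l] &, injective f} /\
       forall l, pair x l = lam l -> row (f l) M = u l).

Definition inW (v w : pt -> R) (betastar : R) : Prop :=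
  smooth_on_closed (closure Ppoly) v /\ smooth_on_closed (closure Ppoly) w /\
  (forall x, closure Ppoly x -> 0 < v x) /\
  (exists C1 C2 : R, 0 < C1 /\ 0 < C2 /\
     forall x, closure Ppoly x -> `|v x| <= C1 * expR (- C2 * eucl x)) /\
  (forall k : nat, exists Ck : R, forall x, closure Ppoly x ->
     \sum_(a : {ffun 'I_n -> 'I_k.+1} | (\sum_i (a i : nat) <= k)%N)
        `|(v x)^-1 * dmulti (fun i => a i : nat) v x| <= Ck) /\
  0 < betastar /\
  (forall k : nat, exists C3k : R,
     \sum_(a : {ffun 'I_n -> 'I_k.+1} | (\sum_i (a i : nat) <= k)%N)
        (sup [set `|(v x) `^ (- betastar) * dmulti (fun i => a i : nat) w x|
              | x in closure Ppoly]) <= C3k /\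
     forall (a : {ffun 'I_n -> 'I_k.+1}), (\sum_i (a i : nat) <= k)%N ->
       has_ubound [set `|(v x) `^ (- betastar) * dmulti (fun i => a i : nat) w x|
              | x in closure Ppoly]).

Definition inHeps (v : pt -> R) (eps : R) (H : pt -> 'M[R]_n) (upot : pt -> R) : Prop :=
  smooth_on Ppoly upot /\
  (forall x, Ppoly x -> H x = invmx (Hess upot x) /\ posdef (H x)) /\
  (* (1) *)
  (exists C, forall x, Ppoly x -> (v x) `^ eps * \sum_i \sum_j (H x i j) ^+ 2 <= C) /\
  (* (2) *)
  (exists C, forall x, Ppoly x ->
     (v x) `^ eps * \sum_i \sum_j \sum_k (partial k (fun y => H y i j) x) ^+ 2 <= C) /\
  (* (3) *)
  (exists dbar : R, 0 < dbar /\ exists C, forall x,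
     closure Ppoly x -> ~ Pdelta dbar x -> forall i j k l,
       (partial k (partial l (fun y => H y i j)) x) ^+ 2 < C) /\
  (* (4) *)
  (exists C, forall x, closure Ppoly x -> `|(v x) `^ eps * upot x| <= C) /\
  (exists delta0 : R, 0 < delta0 /\ forall delta, 0 < delta < delta0 ->
     exists C, forall x, Pdelta delta x ->
       \sum_(a : {ffun 'I_n -> 'I_3} | (\sum_i (a i : nat) <= 2)%N)
          `|(v x) `^ eps * dmulti (fun i => a i : nat) upot x| <= C).

End Defs.

From HB Require Import structures.
From mathcomp Require Import all_boot all_order all_algebra.
From mathcomp Require Import all_classical all_reals all_analysis.
From mathcomp.algebra_tactics Require Import ring lra.
Set Implicit Arguments.
Unset Strict Implicit.
Unset Printing Implicit Defensive.
Import Order.TTheory GRing.Theory Num.Theory.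
Import numFieldNormedType.Exports.
Local Open Scope classical_set_scope.
Local Open Scope ring_scope.

(* Expanding (v H_ij)_k = v (H_ij)_k + H_ij v_k gives
     v^(eps-1) |(v H_ij)_k| <= v^eps |(H_ij)_k| + v^eps |H_ij| * |v_k| / v.
   The exponential decay of v bounds v from above, hence v^eps <= A as eps <= 1,
   and then (v^eps |f|)^2 = v^eps (v^eps f^2) <= A C for f = H_ij and f = (H_ij)_k
   by conditions (1) and (2); |v_k| / v is bounded because (v, w) lies in W(P).
   The entries of H = (Hess u)^-1 are differentiable by the adjugate formula. *)

Section DifferentiableMatrixEntries.
Variables (R : realType) (V : normedModType R).

Lemma differentiable_big_sum (I : Type) (r : seq I) (P : pred I)
    (F : I -> V -> R) (x : V) :
  (forall i, differentiable (F i) x) ->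
  differentiable (fun y => \sum_(i <- r | P i) F i y) x.
Proof.
by move=> dF; rewrite -fct_sumE; elim/big_ind: _ => // f g; apply: differentiableD.
Qed.

Lemma differentiable_big_prod (I : Type) (r : seq I) (P : pred I)
    (F : I -> V -> R) (x : V) :
  (forall i, differentiable (F i) x) ->
  differentiable (fun y => \prod_(i <- r | P i) F i y) x.
Proof.
by move=> dF; rewrite -fct_prodE; elim/big_ind: _ => // f g; apply: differentiableM.
Qed.

Lemma differentiable_cstM (c : R) (f : V -> R) (x : V) :
  differentiable f x -> differentiable (fun y => c * f y) x.
Proof. exact: differentiableM (differentiable_cst c x). Qed.

Lemma differentiable_det (m : nat) (F : V -> 'M[R]_m) (x : V) :
  (forall a b, differentiable (fun y => F y a b) x) ->
  differentiable (fun y => \det (F y)) x.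
Proof.
move=> dF; apply: differentiable_big_sum => s.
by apply: differentiable_cstM; apply: differentiable_big_prod.
Qed.

Lemma differentiable_adj (m : nat) (F : V -> 'M[R]_m) (x : V) i j :
  (forall a b, differentiable (fun y => F y a b) x) ->
  differentiable (fun y => \adj (F y) i j) x.
Proof.
move=> dF.
have -> : (fun y => \adj (F y) i j) =
          (fun y => (-1) ^+ (j + i) * \det (row' j (col' i (F y)))).
  by apply: funext => y; rewrite mxE.
apply: differentiable_cstM; apply: differentiable_det => a b.
have -> : (fun y => row' j (col' i (F y)) a b) = (fun y => F y (lift j a) (lift i b)).
  by apply: funext => y; rewrite !mxE.
exact: dF.
Qed.

Lemma derivable_invmx_entry (m : nat) (F : V -> 'M[R]_m) (x e : V) i j :
  (\forall y \near x, F y \in unitmx) ->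
  (forall a b, differentiable (fun y => F y a b) x) ->
  derivable (fun y => invmx (F y) i j) x e.
Proof.
move=> Funit dF.
have Fxunit : F x \in unitmx by apply: nbhs_singleton Funit.
apply: (near_eq_derivable (f := fun y => (\det (F y))^-1 * \adj (F y) i j)).
  by apply: filterS Funit => y Fyunit; rewrite /invmx Fyunit !mxE.
apply: diff_derivable; apply: differentiableM; last exact: differentiable_adj.
apply: differentiableV; first exact: differentiable_det.
by rewrite -unitfE -unitmxE.
Qed.

End DifferentiableMatrixEntries.

Lemma posdef_unitmx (R : realType) (n : nat) (M : 'M[R]_n) : posdef M -> M \in unitmx.
Proof.
move=> [_ Mpos]; apply: contraT => Mnunit.
have : kermx M != 0 by rewrite kermx_eq0 row_free_unit.
apply: contraNT => _; apply/eqP/row_matrixP => i; rewrite row0.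
apply/eqP; apply: contraT => /Mpos.
by rewrite -row_mul mulmx_ker row0 mul0mx mxE ltxx.
Qed.

Lemma dmulti_delta (R : realType) (n : nat) (k : 'I_n) (f : 'rV[R]_n -> R) :
  dmulti (fun i => nat_of_bool (i == k)) f = partial k f.
Proof.
have foldr_delta (s : seq 'I_n) : uniq s ->
    foldr (fun i g => iter (i == k) (partial i) g) f s =
    if k \in s then partial k f else f.
  elim: s => [|a s IH] //= /andP[a_notin_s /IH ->]; rewrite in_cons.
  by case: (eqVneq a k) => [<-|] //=; rewrite (negbTE a_notin_s).
by rewrite /dmulti foldr_delta ?enum_uniq ?mem_enum.
Qed.

Lemma partialM (R : realType) (n : nat) (f g : 'rV[R]_n -> R) k x :
  derivable f x (delta_mx 0 k) -> derivable g x (delta_mx 0 k) ->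
  partial k (fun y => f y * g y) x = f x * partial k g x + g x * partial k f x.
Proof. exact: deriveM. Qed.

Lemma ler_sum_term (R : numDomainType) (I : finType) (P : pred I) (F : I -> R) i :
  (forall j, P j -> 0 <= F j) -> P i -> F i <= \sum_(j | P j) F j.
Proof.
move=> F_ge0 Pi; rewrite (bigD1 i) //= lerDl.
by apply: sumr_ge0 => j /andP[/F_ge0].
Qed.

Lemma powR_le_max1 (R : realType) (a e C : R) :
  0 < a <= C -> 0 <= e <= 1 -> a `^ e <= Num.max 1 C.
Proof.
move=> /andP[a_gt0 a_leC] /andP[e_ge0 e_le1]; rewrite le_max.
have [a_le1|a_gt1] := lerP a 1; apply/orP; [left|right].
  by rewrite -(powRr0 a); apply: ger_powR; rewrite ?a_gt0.
by apply: le_trans a_leC; apply: ler1_powR => //; apply: ltW.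
Qed.

Lemma mul_norm_le_of_sqr (R : realFieldType) (p A K t : R) :
  0 <= p <= A -> p * t ^+ 2 <= K -> p * `|t| <= 1 + A * K.
Proof.
move=> /andP[p_ge0 p_leA] ptK.
have sqr_le : (p * `|t|) ^+ 2 <= A * K.
  rewrite exprMn real_normK ?num_real // expr2 -mulrA.
  by apply: ler_pM => //; rewrite mulr_ge0 ?sqr_ge0.
have := sqr_ge0 (p * `|t| - 1); nra.
Qed.

Lemma weighted_product_rule_ub (R : realFieldType) (a p A K1 K2 D h g c : R) :
  0 < a -> 0 <= p <= A -> p * h ^+ 2 <= K1 -> p * g ^+ 2 <= K2 -> `|c| / a <= D ->
  p / a * `|a * g + h * c| <= (1 + A * K2) + (1 + A * K1) * D.
Proof.
move=> a_gt0 pA phK1 pgK2 caD.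
have p_ge0 : 0 <= p by case/andP: pA.
have pg_le := mul_norm_le_of_sqr pA pgK2.
have ph_le := mul_norm_le_of_sqr pA phK1.
have ca_ge0 : 0 <= `|c| / a by rewrite divr_ge0 // ltW.
have ph_ge0 : 0 <= p * `|h| by rewrite mulr_ge0.
have split_norm : p / a * `|a * g + h * c| <= p * `|g| + p * `|h| * (`|c| / a).
  apply: le_trans (ler_wpM2l _ (ler_normD _ _)) _; first by rewrite divr_ge0 // ltW.
  rewrite !normrM (gtr0_norm a_gt0).
  suff -> : p / a * (a * `|g| + `|h| * `|c|) = p * `|g| + p * `|h| * (`|c| / a) by [].
  by field; rewrite gt_eqF.
have := ler_pM ph_ge0 ca_ge0 ph_le caD; lra.
Qed.

Section WeightedDerivativeBound.
Variables (R : realType) (n d : nat) (u : 'I_d -> 'rV[int]_n) (lam : 'I_d -> R).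
Variables (v w : 'rV[R]_n -> R) (H : 'rV[R]_n -> 'M[R]_n) (upot : 'rV[R]_n -> R).
Variables (eps betastar : R).
Hypothesis vw_in_W : inW u lam v w betastar.
Hypothesis H_in_Heps : inHeps u lam v eps H upot.
Hypotheses (eps_ge0 : 0 <= eps) (eps_le1 : eps <= 1).
Notation P := (Ppoly u lam).

Lemma weight_gt0 x : P x -> 0 < v x.
Proof.
by have [_ [_ [v_gt0 _]]] := vw_in_W; move=> Px; apply/v_gt0/subset_closure.
Qed.

Lemma weight_differentiable x : P x -> differentiable v x.
Proof.
have [[U [PU [_ v_smooth]]] _] := vw_in_W.
by move=> Px; apply: (v_smooth [::]); apply/PU/subset_closure.
Qed.

Lemma weight_powR_ub : exists A, forall x, P x -> 0 <= v x `^ eps <= A.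
Proof.
have [_ [_ [_ [[C1 [C2 [C1_gt0 [C2_gt0 v_decay]]]] _]]]] := vw_in_W.
exists (Num.max 1 C1) => x Px; rewrite powR_ge0 /=.
apply: powR_le_max1; last by rewrite eps_ge0.
rewrite weight_gt0 //=; apply: le_trans (ler_norm _) _.
apply: le_trans (v_decay x (subset_closure Px)) _.
rewrite ler_piMr ?(ltW C1_gt0) // expR_le1 mulNr oppr_le0 mulr_ge0 ?(ltW C2_gt0) //.
exact: sqrtr_ge0.
Qed.

Lemma weight_log_partial_ub : exists D, forall x k, P x -> `|partial k v x| / v x <= D.
Proof.
have [_ [_ [_ [_ [v_log_derivatives _]]]]] := vw_in_W.
have [D v_first_order] := v_log_derivatives 1%N.
exists D => x k Px; apply: le_trans (v_first_order x (subset_closure Px)).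
pose b : {ffun 'I_n -> 'I_2} := [ffun i => if i == k then ord_max else ord0].
have b_delta : (fun i => b i : nat) = (fun i => nat_of_bool (i == k)).
  by apply: funext => i; rewrite ffunE; case: (i == k).
have b_order1 : (\sum_i (b i : nat) <= 1)%N.
  rewrite (bigD1 k) //= big1 ?addn0 ?ffunE ?eqxx // => i /negbTE i_neq_k.
  by rewrite ffunE i_neq_k.
apply: le_trans (ler_sum_term _ b_order1) => [|c _]; last exact: normr_ge0.
have v_inv_ge0 : 0 <= (v x)^-1 by rewrite invr_ge0 ltW ?weight_gt0.
by rewrite b_delta dmulti_delta normrM (ger0_norm v_inv_ge0) mulrC.
Qed.

Lemma H_entry_derivable x i j e : P x -> derivable (fun y => H y i j) x e.
Proof.
have [[P_open upot_smooth] [H_invHess _]] := H_in_Heps.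
move=> Px; have P_near_x : \forall y \near x, P y by apply: P_open.
apply: (near_eq_derivable (f := fun y => invmx (Hess upot y) i j)).
  by apply: filterS P_near_x => y /H_invHess[->].
apply: derivable_invmx_entry => [|a b]; last first.
  have -> : (fun y => Hess upot y a b) = dseq [:: a; b] upot.
    by apply: funext => y; rewrite mxE.
  exact: upot_smooth.
apply: filterS P_near_x => y /H_invHess[H_eq /posdef_unitmx].
by rewrite H_eq unitmx_inv.
Qed.

Lemma weighted_H_sqr_ub : exists K, forall x i j, P x -> v x `^ eps * H x i j ^+ 2 <= K.
Proof.
have [_ [_ [[K H_ub] _]]] := H_in_Heps.
exists K => x i j Px; apply: le_trans (H_ub x Px); rewrite ler_wpM2l ?powR_ge0 //.
apply: le_trans (ler_sum_term _ (isT : predT i)) => [|i' _].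
  by apply: ler_sum_term => // j' _; exact: sqr_ge0.
by apply: sumr_ge0 => j' _; exact: sqr_ge0.
Qed.

Lemma weighted_partial_H_sqr_ub : exists K, forall x i j k, P x ->
  v x `^ eps * partial k (fun y => H y i j) x ^+ 2 <= K.
Proof.
have [_ [_ [_ [[K dH_ub] _]]]] := H_in_Heps.
exists K => x i j k Px; apply: le_trans (dH_ub x Px); rewrite ler_wpM2l ?powR_ge0 //.
apply: le_trans (ler_sum_term _ (isT : predT i)) => [|i' _]; last first.
  by apply: sumr_ge0 => j' _; apply: sumr_ge0 => k' _; exact: sqr_ge0.
apply: le_trans (ler_sum_term _ (isT : predT j)) => [|j' _]; last first.
  by apply: sumr_ge0 => k' _; exact: sqr_ge0.
by apply: ler_sum_term => // k' _; exact: sqr_ge0.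
Qed.

Lemma weighted_partial_vH_ub : exists T, forall x i j k, P x ->
  v x `^ (eps - 1) * `|partial k (fun y => v y * H y i j) x| <= T.
Proof.
have [A vpow_ub] := weight_powR_ub.
have [D vlog_ub] := weight_log_partial_ub.
have [K1 H_ub] := weighted_H_sqr_ub.
have [K2 dH_ub] := weighted_partial_H_sqr_ub.
exists ((1 + A * K2) + (1 + A * K1) * D) => x i j k Px.
have v_gt0 := weight_gt0 Px.
rewrite partialM; last 2 first.
- exact/diff_derivable/weight_differentiable.
- exact: H_entry_derivable.
rewrite powRB ?(gt_eqF v_gt0) ?implybT // powRr1 ?(ltW v_gt0) //.
apply: weighted_product_rule_ub;
  [exact: v_gt0 | exact: vpow_ub | exact: H_ub | exact: dH_ub | exact: vlog_ub].
Qed.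

End WeightedDerivativeBound.

Unset Implicit Arguments.

Theorem lemma3p5 (R : realType) (n d : nat) (u : 'I_d -> 'rV[int]_n) (lam : 'I_d -> R)
  (v w : 'rV[R]_n -> R) (H : 'rV[R]_n -> 'M[R]_n) (upot : 'rV[R]_n -> R)
  (eps betastar : R) :
  delzant u lam ->
  inW u lam v w betastar ->
  0 <= eps -> eps < Num.min betastar (1 / 2) ->
  inHeps u lam v eps H upot ->
  exists C : R, 0 < C /\
    (forall i j : 'I_n, exists M : R, M < C /\
       forall x, Ppoly u lam x ->
         (v x) `^ (eps - 1) * \sum_k `|partial k (fun y => v y * H y i j) x| <= M) /\
    (forall j : 'I_n, exists M : R, M < C /\
       forall x, Ppoly u lam x ->
         (v x) `^ (eps - 1) * \sum_i `|partial i (fun y => v y * H y i j) x| <= M).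
Proof.
move=> _ vw_in_W eps_ge0 eps_lt H_in_Heps.
have eps_le1 : eps <= 1.
  by move: eps_lt; rewrite lt_min => /andP[_ /ltW/le_trans]; apply; lra.
have [T vH_ub] := weighted_partial_vH_ub vw_in_W H_in_Heps eps_ge0 eps_le1.
have sum_ub x (F : 'I_n -> R) : (forall k, v x `^ (eps - 1) * `|F k| <= T) ->
    v x `^ (eps - 1) * \sum_k `|F k| <= `|T| *+ n.
  move=> F_ub; rewrite mulr_sumr -[in leRHS](card_ord n) -sumr_const.
  by apply: ler_sum => k _; apply: le_trans (F_ub k) (ler_norm T).
exists (`|T| *+ n + 1); split; first by rewrite ltr_wpDl ?mulrn_wge0.
split=> [i j|j]; exists (`|T| *+ n); split; rewrite ?ltrDl // => x Px;
  by apply: sum_ub => k; apply: vH_ub.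
Qed.
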